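(* The loss of information about the receiver's orientation due to the nuisance parameters is $$\mathbf G(\boldsymbol\Phi_U,\boldsymbol\Phi_U)=\sum_b\frac{\mathbf a_b\mathbf a_b^T}{\sum_{u,k}\mathrm{SNR}_{bu,k}\omega_{bU,k}}+\frac{\mathbf a_Q\mathbf a_Q^T}{\sum_{q,u,k}\mathrm{SNR}_{qu,k}\omega_{qU,k}},$$ where $\mathbf a_b=\sum_{k,u}\mathrm{SNR}_{bu,k}\,\omega_{bU,k}\nabla_{\boldsymbol\Phi_U}\tau_{bu,k}$ and $\mathbf a_Q=\sum_{q,k,u}\mathrm{SNR}_{qu,k}\,\omega_{qU,k}\nabla_{\boldsymbol\Phi_U}\tau_{qu,k}$.
   Context: System: $N_B$ single-antenna LEO satellites indexed by $b$, $N_Q$ mutually synchronized single-antenna base stations (BSs) indexed by $q$, and a receiver with $N_U$ antennas indexed by $u$; transmissions occur in $N_K$ slots indexed by $k$, spaced $\Delta_t$ apart; $c$ is the speed of light, $f_c$ the carrier frequency. Receiver antenna $u$ is at $\mathbf p_{u,k}=\mathbf p_{U,0}+k\Delta_t\mathbf v_{U,0}+\mathbf Q(\boldsymbol\Phi_U)\tilde{\mathbf s}_u$, with $\mathbf Q(\boldsymbol\Phi_U)$ the 3D rotation matrix for orientation angles $\boldsymbol\Phi_U=[\alpha_U,\psi_U,\varphi_U]^T$ and $\tilde{\mathbf s}_u$ a known offset. LEO $b$ has known nominal position/velocity $\mathbf p_{b,k},\mathbf v_{b,k}$ and unknown constant position offset $\check{\mathbf p}_{b,0}$ and velocity offset $\check{\mathbf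 v}_{b,0}$; BSs are static and known. $\boldsymbol\Delta_{xy,k}$ is the unit vector from entity $x$ to entity $y$ at slot $k$ ($U$: receiver centroid, $u$: antenna $u$). Channel parameters: LEO–receiver link: delays $\tau_{bu,k}$, Dopplers $\nu_{bU,k}=\boldsymbol\Delta_{bU,k}^T(\mathbf v_{b,k}+\check{\mathbf v}_{b,0}-\mathbf v_{U,0})/c$, gains, time offset $\delta_{bU}$, frequency offset $\epsilon_{bU}$; BS–receiver link: delays $\tau_{qu,k}$, Dopplers $\nu_{qU,k}=-\boldsymbol\Delta_{qU,k}^T\mathbf v_{U,0}/c$, gains, common offsets $\delta_{QU},\epsilon_{QU}$; LEO–BS link: delays $\tau_{bq,k}$, Dopplers $\nu_{bq,k}=\boldsymbol\Delta_{bq,k}^T(\mathbf v_{b,k}+\check{\mathbf v}_{b,0})/c$, gains, offsets $\delta_{bQ},\epsilon_{bQ}$. $\mathrm{SNR}_{bu,k},\mathrm{SNR}_{qu,k},\mathrm{SNR}_{bq,k}$ are the received SNRs; $\alpha_{obu,k},\alpha_{oqu,k},\alpha_{obq,k}$ the RMS time durations; $\alpha_{1x,k},\alpha_{2x,k}$ the effective baseband bandwidth and baseband–carrier correlation of transmitter $x$; $f_{obU,k}=f_c(1-\nu_{bU,k})+\epsilon_{bU}$, $f_{oqU,k}=f_c(1-\nu_{qU,k})+\epsilon_{QU}$, $f_{obq,k}=f_c(1-\nu_{bq,k})+\epsilon_{bQ}$, and $\omega_{bU,k}=\alpha_{1b,k}^2+2f_{obU,k}\alpha_{1b,k}\alpha_{2b,k}+f_{obU,k}^2$,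 $\omega_{qU,k}=\alpha_{1q,k}^2+2f_{oqU,k}\alpha_{1q,k}\alpha_{2q,k}+f_{oqU,k}^2$, $\omega_{bq,k}=\alpha_{1q,k}^2+2f_{obq,k}\alpha_{1q,k}\alpha_{2q,k}+f_{obq,k}^2$. Channel-parameter FIM (links mutually independent, contributions additive): each observation (antenna $u$, slot $k$, LEO $b$) contributes $F(\tau_{bu,k},\tau_{bu,k})=F(\delta_{bU},\delta_{bU})=-F(\tau_{bu,k},\delta_{bU})=\mathrm{SNR}_{bu,k}\omega_{bU,k}$, $F(\nu_{bU,k},\nu_{bU,k})=\tfrac12\mathrm{SNR}_{bu,k}f_c^2\alpha_{obu,k}^2$, $F(\nu_{bU,k},\epsilon_{bU})=-\tfrac12\mathrm{SNR}_{bu,k}f_c\alpha_{obu,k}^2$, $F(\epsilon_{bU},\epsilon_{bU})=\tfrac12\mathrm{SNR}_{bu,k}\alpha_{obu,k}^2$, a gain-only diagonal term, and all other entries zero; the BS–receiver (indices $qu,k$, offsets $\delta_{QU},\epsilon_{QU}$, $\omega_{qU,k},\alpha_{oqu,k}$) and LEO–BS (indices $bq,k$, offsets $\delta_{bQ},\epsilon_{bQ}$, $\omega_{bq,k},\alpha_{obq,k}$) links are analogous. Location FIM: $\mathbf J_{\boldsymbol\kappa}=\boldsymbol\Upsilon\mathbf J_{\boldsymbol\eta}\boldsymbol\Upsilon^T$ where $\boldsymbol\Upsilon$ is the Jacobian with nonzero derivatives $\nabla_{\mathbf p_{U,0}}\tau_{bu,k}=\boldsymbol\Delta_{bu,k}/c$,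 $\nabla_{\mathbf p_{U,0}}\tau_{qu,k}=\boldsymbol\Delta_{qu,k}/c$, $\nabla_{\check{\mathbf p}_{b,0}}\tau_{bu,k}=-\boldsymbol\Delta_{bu,k}/c$, $\nabla_{\check{\mathbf p}_{b,0}}\tau_{bq,k}=-\boldsymbol\Delta_{bq,k}/c$, $\nabla_{\mathbf v_{U,0}}\tau_{bu,k}=k\Delta_t\boldsymbol\Delta_{bu,k}/c$, $\nabla_{\mathbf v_{U,0}}\tau_{qu,k}=k\Delta_t\boldsymbol\Delta_{qu,k}/c$, $\nabla_{\check{\mathbf v}_{b,0}}\tau_{bu,k}=-k\Delta_t\boldsymbol\Delta_{bu,k}/c$, $\nabla_{\check{\mathbf v}_{b,0}}\tau_{bq,k}=-k\Delta_t\boldsymbol\Delta_{bq,k}/c$, $\nabla_{\mathbf v_{U,0}}\nu_{bU,k}=-\boldsymbol\Delta_{bU,k}/c$, $\nabla_{\mathbf v_{U,0}}\nu_{qU,k}=-\boldsymbol\Delta_{qU,k}/c$, $\nabla_{\check{\mathbf v}_{b,0}}\nu_{bU,k}=\boldsymbol\Delta_{bU,k}/c$, $\nabla_{\check{\mathbf v}_{b,0}}\nu_{bq,k}=\boldsymbol\Delta_{bq,k}/c$, $\nabla_{\boldsymbol\Phi_U}\tau_{xu,k}=\frac1c[\boldsymbol\Delta_{xu,k}^T\partial_{\alpha_U}\mathbf Q\tilde{\mathbf s}_u,\boldsymbol\Delta_{xu,k}^T\partial_{\psi_U}\mathbf Q\tilde{\mathbf s}_u,\boldsymbol\Delta_{xu,k}^T\partial_{\varphi_U}\mathbf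 Q\tilde{\mathbf s}_u]^T$ ($x\in\{b,q\}$), the Doppler position-gradients $\nabla_{\mathbf p_{U,0}}\nu_{bU,k},\nabla_{\mathbf p_{U,0}}\nu_{qU,k},\nabla_{\check{\mathbf p}_{b,0}}\nu_{bU,k},\nabla_{\check{\mathbf p}_{b,0}}\nu_{bq,k}$, and identity on gains and offsets. $\mathbf F(\mathbf x,\mathbf y)$ denotes the block of $\mathbf J_{\boldsymbol\kappa}$ for sub-vectors $\mathbf x,\mathbf y$. Information loss: split $\boldsymbol\kappa=(\boldsymbol\kappa_1,\boldsymbol\kappa_2)$ with $\boldsymbol\kappa_1=(\mathbf p_{U,0},\mathbf v_{U,0},\boldsymbol\Phi_U,\{\check{\mathbf p}_{b,0}\},\{\check{\mathbf v}_{b,0}\})$ and nuisance $\boldsymbol\kappa_2$ = all channel gains and all time/frequency offsets $\delta_{bU},\epsilon_{bU},\delta_{QU},\epsilon_{QU},\delta_{bQ},\epsilon_{bQ}$. The loss matrix is $\mathbf J^{nu}=\mathbf J_{\boldsymbol\kappa_1,\boldsymbol\kappa_2}\mathbf J_{\boldsymbol\kappa_2}^{-1}\mathbf J_{\boldsymbol\kappa_1,\boldsymbol\kappa_2}^T$ (so the equivalent FIM is $\mathbf J_{\boldsymbol\kappa_1}-\mathbf J^{nu}$), and $\mathbf G(\mathbf x,\mathbf y)$ denotes its block for sub-vectors $\mathbf x,\mathbf y$. *)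

From HB Require Import structures.
From mathcomp Require Import all_boot all_order all_algebra.
Set Implicit Arguments. Unset Strict Implicit. Unset Printing Implicit Defensive.
Import Order.TTheory GRing.Theory Num.Theory.
Local Open Scope ring_scope.

(* kappa_1 : location parameters p_U0, v_U0, Phi_U, {pcheck_b0}, {vcheck_b0} *)
Inductive kap1 (NB : nat) :=
| KpU of 'I_3 | KvU of 'I_3 | KPhi of 'I_3
| Kpb of 'I_NB & 'I_3 | Kvb of 'I_NB & 'I_3.

(* kappa_2 : nuisance parameters: channel gains of the three link types and
   the offsets delta_bU, eps_bU, delta_QU, eps_QU, delta_bQ, eps_bQ *)
Inductive kap2 (NB NQ NU NK : nat) :=
| Gbu of 'I_NB & 'I_NU & 'I_NK
| Gqu of 'I_NQ & 'I_NU & 'I_NK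
| Gbq of 'I_NB & 'I_NQ & 'I_NK
| DbU of 'I_NB | EbU of 'I_NB
| DQU | EQU
| DbQ of 'I_NB | EbQ of 'I_NB.

(* eta : channel parameters: nuisance ones (shared with kappa_2) plus the
   delays and Dopplers of the three link types *)
Inductive eta (NB NQ NU NK : nat) :=
| Nuis of kap2 NB NQ NU NK
| Tbu of 'I_NB & 'I_NU & 'I_NK
| VbU of 'I_NB & 'I_NK
| Tqu of 'I_NQ & 'I_NU & 'I_NK
| VqU of 'I_NQ & 'I_NK
| Tbq of 'I_NB & 'I_NQ & 'I_NK
| Vbq of 'I_NB & 'I_NQ & 'I_NK.

Arguments KpU {NB}. Arguments KvU {NB}. Arguments KPhi {NB}.
Arguments Kpb {NB}. Arguments Kvb {NB}.
Arguments Gbu {NB NQ NU NK}. Arguments Gqu {NB NQ NU NK}.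
Arguments Gbq {NB NQ NU NK}. Arguments DbU {NB NQ NU NK}.
Arguments EbU {NB NQ NU NK}. Arguments DQU {NB NQ NU NK}.
Arguments EQU {NB NQ NU NK}. Arguments DbQ {NB NQ NU NK}.
Arguments EbQ {NB NQ NU NK}.
Arguments Nuis {NB NQ NU NK}. Arguments Tbu {NB NQ NU NK}.
Arguments VbU {NB NQ NU NK}. Arguments Tqu {NB NQ NU NK}.
Arguments VqU {NB NQ NU NK}. Arguments Tbq {NB NQ NU NK}.
Arguments Vbq {NB NQ NU NK}.

Section FinInstances.
Variables NB NQ NU NK : nat.

Definition kap1_enc (x : kap1 NB) :
  ('I_3 + 'I_3 + 'I_3 + ('I_NB * 'I_3) + ('I_NB * 'I_3))%type :=
  match x with
  | KpU i => inl (inl (inl (inl i)))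
  | KvU i => inl (inl (inl (inr i)))
  | KPhi i => inl (inl (inr i))
  | Kpb b i => inl (inr (b, i))
  | Kvb b i => inr (b, i)
  end.
Definition kap1_dec (y : ('I_3 + 'I_3 + 'I_3 + ('I_NB * 'I_3) + ('I_NB * 'I_3))%type)
  : kap1 NB :=
  match y with
  | inl (inl (inl (inl i))) => KpU i
  | inl (inl (inl (inr i))) => KvU i
  | inl (inl (inr i)) => KPhi i
  | inl (inr (b, i)) => Kpb b i
  | inr (b, i) => Kvb b i
  end.
Lemma kap1_encK : cancel kap1_enc kap1_dec. Proof. by case. Qed.
HB.instance Definition _ := Finite.copy (kap1 NB) (can_type kap1_encK).

Definition kap2_code :=
  (('I_NB * 'I_NU * 'I_NK) + ('I_NQ * 'I_NU * 'I_NK) + ('I_NB * 'I_NQ * 'I_NK)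
   + 'I_NB + 'I_NB + unit + unit + 'I_NB + 'I_NB)%type.
Definition kap2_enc (x : kap2 NB NQ NU NK) : kap2_code :=
  match x with
  | Gbu b u k => inl (inl (inl (inl (inl (inl (inl (inl (b, u, k))))))))
  | Gqu q u k => inl (inl (inl (inl (inl (inl (inl (inr (q, u, k))))))))
  | Gbq b q k => inl (inl (inl (inl (inl (inl (inr (b, q, k)))))))
  | DbU b => inl (inl (inl (inl (inl (inr b)))))
  | EbU b => inl (inl (inl (inl (inr b))))
  | DQU => inl (inl (inl (inr tt)))
  | EQU => inl (inl (inr tt))
  | DbQ b => inl (inr b)
  | EbQ b => inr b
  end.
Definition kap2_dec (y : kap2_code) : kap2 NB NQ NU NK :=
  match y with
  | inl (inl (inl (inl (inl (inl (inl (inl (b, u, k)))))))) => Gbu b u k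
  | inl (inl (inl (inl (inl (inl (inl (inr (q, u, k)))))))) => Gqu q u k
  | inl (inl (inl (inl (inl (inl (inr (b, q, k))))))) => Gbq b q k
  | inl (inl (inl (inl (inl (inr b))))) => DbU b
  | inl (inl (inl (inl (inr b)))) => EbU b
  | inl (inl (inl (inr _))) => DQU
  | inl (inl (inr _)) => EQU
  | inl (inr b) => DbQ b
  | inr b => EbQ b
  end.
Lemma kap2_encK : cancel kap2_enc kap2_dec. Proof. by case. Qed.
HB.instance Definition _ := Finite.copy (kap2 NB NQ NU NK) (can_type kap2_encK).

Definition eta_code :=
  (kap2 NB NQ NU NK + ('I_NB * 'I_NU * 'I_NK) + ('I_NB * 'I_NK)
   + ('I_NQ * 'I_NU * 'I_NK) + ('I_NQ * 'I_NK)
   + ('I_NB * 'I_NQ * 'I_NK) + ('I_NB * 'I_NQ * 'I_NK))%type.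
Definition eta_enc (x : eta NB NQ NU NK) : eta_code :=
  match x with
  | Nuis n => inl (inl (inl (inl (inl (inl n)))))
  | Tbu b u k => inl (inl (inl (inl (inl (inr (b, u, k))))))
  | VbU b k => inl (inl (inl (inl (inr (b, k)))))
  | Tqu q u k => inl (inl (inl (inr (q, u, k))))
  | VqU q k => inl (inl (inr (q, k)))
  | Tbq b q k => inl (inr (b, q, k))
  | Vbq b q k => inr (b, q, k)
  end.
Definition eta_dec (y : eta_code) : eta NB NQ NU NK :=
  match y with
  | inl (inl (inl (inl (inl (inl n))))) => Nuis n
  | inl (inl (inl (inl (inl (inr (b, u, k)))))) => Tbu b u k
  | inl (inl (inl (inl (inr (b, k))))) => VbU b k
  | inl (inl (inl (inr (q, u, k)))) => Tqu q u k
  | inl (inl (inr (q, k))) => VqU q k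
  | inl (inr (b, q, k)) => Tbq b q k
  | inr (b, q, k) => Vbq b q k
  end.
Lemma eta_encK : cancel eta_enc eta_dec. Proof. by case. Qed.
HB.instance Definition _ := Finite.copy (eta NB NQ NU NK) (can_type eta_encK).
End FinInstances.

(* System data (all quantities evaluated at the true parameter values).    *)
Record system (R : realFieldType) (NB NQ NU NK : nat) := System {
  c_light : R;
  fc : R;
  dt : R;                                    (* slot spacing Delta_t *)
  SNRbu : 'I_NB -> 'I_NU -> 'I_NK -> R;
  SNRqu : 'I_NQ -> 'I_NU -> 'I_NK -> R;
  SNRbq : 'I_NB -> 'I_NQ -> 'I_NK -> R;
  (* RMS time durations alpha_o *)
  aobu : 'I_NB -> 'I_NU -> 'I_NK -> R;
  aoqu : 'I_NQ -> 'I_NU -> 'I_NK -> R;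
  aobq : 'I_NB -> 'I_NQ -> 'I_NK -> R;
  (* effective baseband bandwidth alpha_1 and correlation alpha_2 of the
     transmitters (LEO b, BS q) *)
  a1b : 'I_NB -> 'I_NK -> R; a2b : 'I_NB -> 'I_NK -> R;
  a1q : 'I_NQ -> 'I_NK -> R; a2q : 'I_NQ -> 'I_NK -> R;
  epsbU : 'I_NB -> R; epsQU : R; epsbQ : 'I_NB -> R;
  (* velocities: receiver v_U0, nominal LEO v_{b,k}, LEO offset vcheck_b0 *)
  vU : 'I_3 -> R;
  vb : 'I_NB -> 'I_NK -> 'I_3 -> R;
  vcb : 'I_NB -> 'I_3 -> R;
  (* unit direction vectors Delta_{xy,k} *)
  Delta_bu : 'I_NB -> 'I_NU -> 'I_NK -> 'I_3 -> R;
  Delta_qu : 'I_NQ -> 'I_NU -> 'I_NK -> 'I_3 -> R;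
  Delta_bq : 'I_NB -> 'I_NQ -> 'I_NK -> 'I_3 -> R;
  Delta_bU : 'I_NB -> 'I_NK -> 'I_3 -> R;
  Delta_qU : 'I_NQ -> 'I_NK -> 'I_3 -> R;
  (* partial derivatives of the rotation matrix Q(Phi_U) w.r.t.
     alpha_U, psi_U, varphi_U (index a), entries (i, j) *)
  dQ : 'I_3 -> 'I_3 -> 'I_3 -> R;
  (* known antenna offsets stilde_u *)
  stilde : 'I_NU -> 'I_3 -> R;
  (* Doppler position-gradients (left unspecified in the paper) *)
  gradpU_nubU : 'I_NB -> 'I_NK -> 'I_3 -> R;
  gradpU_nuqU : 'I_NQ -> 'I_NK -> 'I_3 -> R;
  gradpb_nubU : 'I_NB -> 'I_NK -> 'I_3 -> R;
  gradpb_nubq : 'I_NB -> 'I_NQ -> 'I_NK -> 'I_3 -> R;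
  (* gain-only diagonal FIM terms of each observation *)
  Fgain_bu : 'I_NB -> 'I_NU -> 'I_NK -> R;
  Fgain_qu : 'I_NQ -> 'I_NU -> 'I_NK -> R;
  Fgain_bq : 'I_NB -> 'I_NQ -> 'I_NK -> R
}.

Section Model.
Variables (R : realFieldType) (NB NQ NU NK : nat) (S : system R NB NQ NU NK).

Definition dot3 (x y : 'I_3 -> R) : R := \sum_(i < 3) x i * y i.

Definition nu_bU b k : R :=
  dot3 (Delta_bU S b k) (fun i => vb S b k i + vcb S b i - vU S i) / c_light S.
Definition nu_qU q k : R := - dot3 (Delta_qU S q k) (vU S) / c_light S.
Definition nu_bq b q k : R :=
  dot3 (Delta_bq S b q k) (fun i => vb S b k i + vcb S b i) / c_light S.

Definition f_obU b k : R := fc S * (1 - nu_bU b k) + epsbU S b.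
Definition f_oqU q k : R := fc S * (1 - nu_qU q k) + epsQU S.
Definition f_obq b q k : R := fc S * (1 - nu_bq b q k) + epsbQ S b.

Definition omega_bU b k : R :=
  a1b S b k ^+ 2 + 2 * f_obU b k * a1b S b k * a2b S b k + f_obU b k ^+ 2.
Definition omega_qU q k : R :=
  a1q S q k ^+ 2 + 2 * f_oqU q k * a1q S q k * a2q S q k + f_oqU q k ^+ 2.
Definition omega_bq b q k : R :=
  a1q S q k ^+ 2 + 2 * f_obq b q k * a1q S q k * a2q S q k + f_obq b q k ^+ 2.

Definition gradPhi_tau (Delta : 'I_3 -> R) (u : 'I_NU) (a : 'I_3) : R :=
  (\sum_(i < 3) \sum_(j < 3) Delta i * dQ S a i j * stilde S u j) / c_light S.

Notation etaT := (eta NB NQ NU NK).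
Notation kap2T := (kap2 NB NQ NU NK).

Definition Eind (p q m n : etaT) : R := ((m == p) && (n == q))%:R.

Definition Jeta (m n : etaT) : R :=
  \sum_(b < NB) \sum_(u < NU) \sum_(k < NK)
    ( SNRbu S b u k * omega_bU b k *
        (Eind (Tbu b u k) (Tbu b u k) m n + Eind (Nuis (DbU b)) (Nuis (DbU b)) m n
         - Eind (Tbu b u k) (Nuis (DbU b)) m n - Eind (Nuis (DbU b)) (Tbu b u k) m n)
    + 2^-1 * SNRbu S b u k * fc S ^+ 2 * aobu S b u k ^+ 2 * Eind (VbU b k) (VbU b k) m n
    - 2^-1 * SNRbu S b u k * fc S * aobu S b u k ^+ 2 *
        (Eind (VbU b k) (Nuis (EbU b)) m n + Eind (Nuis (EbU b)) (VbU b k) m n)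
    + 2^-1 * SNRbu S b u k * aobu S b u k ^+ 2 * Eind (Nuis (EbU b)) (Nuis (EbU b)) m n
    + Fgain_bu S b u k * Eind (Nuis (Gbu b u k)) (Nuis (Gbu b u k)) m n )
  + \sum_(q < NQ) \sum_(u < NU) \sum_(k < NK)
    ( SNRqu S q u k * omega_qU q k *
        (Eind (Tqu q u k) (Tqu q u k) m n + Eind (Nuis DQU) (Nuis DQU) m n
         - Eind (Tqu q u k) (Nuis DQU) m n - Eind (Nuis DQU) (Tqu q u k) m n)
    + 2^-1 * SNRqu S q u k * fc S ^+ 2 * aoqu S q u k ^+ 2 * Eind (VqU q k) (VqU q k) m n
    - 2^-1 * SNRqu S q u k * fc S * aoqu S q u k ^+ 2 *
        (Eind (VqU q k) (Nuis EQU) m n + Eind (Nuis EQU) (VqU q k) m n)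
    + 2^-1 * SNRqu S q u k * aoqu S q u k ^+ 2 * Eind (Nuis EQU) (Nuis EQU) m n
    + Fgain_qu S q u k * Eind (Nuis (Gqu q u k)) (Nuis (Gqu q u k)) m n )
  + \sum_(b < NB) \sum_(q < NQ) \sum_(k < NK)
    ( SNRbq S b q k * omega_bq b q k *
        (Eind (Tbq b q k) (Tbq b q k) m n + Eind (Nuis (DbQ b)) (Nuis (DbQ b)) m n
         - Eind (Tbq b q k) (Nuis (DbQ b)) m n - Eind (Nuis (DbQ b)) (Tbq b q k) m n)
    + 2^-1 * SNRbq S b q k * fc S ^+ 2 * aobq S b q k ^+ 2 * Eind (Vbq b q k) (Vbq b q k) m n
    - 2^-1 * SNRbq S b q k * fc S * aobq S b q k ^+ 2 *
        (Eind (Vbq b q k) (Nuis (EbQ b)) m n + Eind (Nuis (EbQ b)) (Vbq b q k) m n)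
    + 2^-1 * SNRbq S b q k * aobq S b q k ^+ 2 * Eind (Nuis (EbQ b)) (Nuis (EbQ b)) m n
    + Fgain_bq S b q k * Eind (Nuis (Gbq b q k)) (Nuis (Gbq b q k)) m n ).

Definition kslot (k : 'I_NK) : R := (nat_of_ord k)%:R.

(* Jacobian Upsilon: rows indexed by kappa_1, entries d eta_m / d kappa_i *)
Definition Ups1 (i : kap1 NB) (m : etaT) : R :=
  let c := c_light S in
  match i, m with
  | KpU j, Tbu b u k => Delta_bu S b u k j / c
  | KpU j, Tqu q u k => Delta_qu S q u k j / c
  | KpU j, VbU b k => gradpU_nubU S b k j
  | KpU j, VqU q k => gradpU_nuqU S q k j
  | KvU j, Tbu b u k => kslot k * dt S * Delta_bu S b u k j / c
  | KvU j, Tqu q u k => kslot k * dt S * Delta_qu S q u k j / c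
  | KvU j, VbU b k => - Delta_bU S b k j / c
  | KvU j, VqU q k => - Delta_qU S q k j / c
  | KPhi j, Tbu b u k => gradPhi_tau (Delta_bu S b u k) u j
  | KPhi j, Tqu q u k => gradPhi_tau (Delta_qu S q u k) u j
  | Kpb b' j, Tbu b u k => (b' == b)%:R * (- Delta_bu S b u k j / c)
  | Kpb b' j, Tbq b q k => (b' == b)%:R * (- Delta_bq S b q k j / c)
  | Kpb b' j, VbU b k => (b' == b)%:R * gradpb_nubU S b k j
  | Kpb b' j, Vbq b q k => (b' == b)%:R * gradpb_nubq S b q k j
  | Kvb b' j, Tbu b u k => (b' == b)%:R * (- (kslot k * dt S * Delta_bu S b u k j) / c)
  | Kvb b' j, Tbq b q k => (b' == b)%:R * (- (kslot k * dt S * Delta_bq S b q k j) / c)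
  | Kvb b' j, VbU b k => (b' == b)%:R * (Delta_bU S b k j / c)
  | Kvb b' j, Vbq b q k => (b' == b)%:R * (Delta_bq S b q k j / c)
  | _, _ => 0
  end.

Definition Ups (i : (kap1 NB + kap2T)%type) (m : etaT) : R :=
  match i with
  | inl i1 => Ups1 i1 m
  | inr i2 => (m == Nuis i2)%:R
  end.

Definition Jkappa (i j : (kap1 NB + kap2T)%type) : R :=
  \sum_(m : etaT) \sum_(n : etaT) Ups i m * Jeta m n * Ups j n.

Definition J12 (i : kap1 NB) (j : kap2T) : R := Jkappa (inl i) (inr j).
Definition J22 (i j : kap2T) : R := Jkappa (inr i) (inr j).

Definition J22mx : 'M[R]_#|{: kap2T}| :=
  \matrix_(i, j) J22 (enum_val i) (enum_val j).
Definition J22inv (i j : kap2T) : R :=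
  invmx J22mx (enum_rank i) (enum_rank j).

Definition Gloss (i j : kap1 NB) : R :=
  \sum_(m : kap2T) \sum_(n : kap2T) J12 i m * J22inv m n * J12 j n.

Definition G_PhiPhi : 'M[R]_3 := \matrix_(i, j) Gloss (KPhi i) (KPhi j).

Definition a_b (b : 'I_NB) (i : 'I_3) : R :=
  \sum_(k < NK) \sum_(u < NU) SNRbu S b u k * omega_bU b k * gradPhi_tau (Delta_bu S b u k) u i.
Definition a_Q (i : 'I_3) : R :=
  \sum_(q < NQ) \sum_(k < NK) \sum_(u < NU) SNRqu S q u k * omega_qU q k * gradPhi_tau (Delta_qu S q u k) u i.
Definition den_b (b : 'I_NB) : R := \sum_(u < NU) \sum_(k < NK) SNRbu S b u k * omega_bU b k.
Definition den_Q : R := \sum_(q < NQ) \sum_(u < NU) \sum_(k < NK) SNRqu S q u k * omega_qU q k.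

Definition outer3 (a : 'I_3 -> R) : 'M[R]_3 := \matrix_(i < 3, j < 3) (a i * a j).

End Model.

(* The orientation Phi_U enters the channel parameters only through the delays
   tau_{bu,k} and tau_{qu,k}, and the only nuisance parameters these delays are
   coupled with in J_eta are the time offsets delta_bU and delta_QU.  Hence the
   Phi_U rows of J_{kappa_1,kappa_2} are -a_b in the column delta_bU, -a_Q in the
   column delta_QU, and zero elsewhere.  Since the Jacobian is the identity on
   kappa_2 and the links are independent, J_{kappa_2} is diagonal, with
   sum_{u,k} SNR_{bu,k} omega_{bU,k} at delta_bU and sum_{q,u,k} SNR_{qu,k}
   omega_{qU,k} at delta_QU; so the loss block is a sum of rank-one terms
   a a^T / J_{kappa_2}(m, m) over these two kinds of offsets. *)

From Pilot Require Import Defs.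
From mathcomp Require Import all_boot all_order all_algebra ring.
Set Implicit Arguments. Unset Strict Implicit. Unset Printing Implicit Defensive.
Import GRing.Theory.
Local Open Scope ring_scope.

Lemma sumr_delta (R : pzSemiRingType) (I : finType) (x : I) (F : I -> R) :
  \sum_i (x == i)%:R * F i = F x.
Proof.
rewrite (bigD1 x) //= eqxx mul1r big1 ?addr0 // => i.
by rewrite eq_sym => /negbTE->; rewrite mul0r.
Qed.

Lemma sumr_delta_r (R : pzSemiRingType) (I : finType) (x : I) (F : I -> R) :
  \sum_i F i * (i == x)%:R = F x.
Proof.
rewrite (bigD1 x) //= eqxx mulr1 big1 ?addr0 // => i /negbTE->.
exact: mulr0.
Qed.

Lemma sum3_delta (R : pzSemiRingType) (I J K : finType) (x : I) (y : J) (z : K)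
    (F : I -> J -> K -> R) :
  \sum_i \sum_j \sum_l ((x, y, z) == (i, j, l))%:R * F i j l = F x y z.
Proof.
rewrite -(sumr_delta x (fun i => F i y z)); apply: eq_bigr => i _.
rewrite -(sumr_delta y (fun j => F i j z)) mulr_sumr; apply: eq_bigr => j _.
rewrite -(sumr_delta z (F i j)) !mulr_sumr; apply: eq_bigr => l _.
by rewrite !xpair_eqE -!mulnb !natrM !mulrA.
Qed.

Lemma sum3_delta_image (R : pzSemiRingType) (M I J K : finType)
    (C : I -> J -> K -> M) (g : I -> J -> K -> R) (F : M -> R) :
  \sum_m (\sum_i \sum_j \sum_l (m == C i j l)%:R * g i j l) * F m
  = \sum_i \sum_j \sum_l g i j l * F (C i j l).
Proof.
under eq_bigr do rewrite big_distrl; rewrite exchange_big; apply: eq_bigr => i _.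
under eq_bigr do rewrite big_distrl; rewrite exchange_big; apply: eq_bigr => j _.
under eq_bigr do rewrite big_distrl; rewrite exchange_big; apply: eq_bigr => l _.
rewrite -(sumr_delta (C i j l) (fun m => g i j l * F m)).
by apply: eq_bigr => m _; rewrite eq_sym mulrA.
Qed.

Lemma sum3_eq0 (R : pzSemiRingType) (I J K : finType) (F : I -> J -> K -> R) :
  (forall i j l, F i j l = 0) -> \sum_i \sum_j \sum_l F i j l = 0.
Proof. by move=> F0; do 3![apply: big1 => ? _]; apply: F0. Qed.

Lemma eq_sum3 (R : pzSemiRingType) (I J K : finType) (F G : I -> J -> K -> R) :
  (forall i j l, F i j l = G i j l) ->
  \sum_i \sum_j \sum_l F i j l = \sum_i \sum_j \sum_l G i j l.
Proof. by move=> FG; do 3![apply: eq_bigr => ? _]; apply: FG. Qed.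

Lemma invmx_diag (F : fieldType) n (A : 'M[F]_n) :
  is_diag_mx A -> A \in unitmx -> invmx A = diag_mx (\row_i (A i i)^-1).
Proof.
move=> /diag_mxP[d ->] Aunit; set e := \row_i _.
have d_nz i : d 0 i != 0.
  by move: Aunit; rewrite unitmxE det_diag unitfE prodf_seq_neq0 => /allP/(_ i); apply.
have DE : diag_mx d *m diag_mx e = 1%:M.
  rewrite mulmx_diag -diag_const_mx; congr diag_mx.
  by apply/rowP => i; rewrite !mxE eqxx mulr1n mulfV.
by rewrite -[LHS]mulmx1 -DE mulmxA mulVmx // mul1mx.
Qed.

(* Indicators (b : bool)%:R are abstracted before calling ring: otherwise ring
   compares them up to conversion, which evaluates equality on the encoded index
   types.  [set] rather than [generalize] also identifies indicators whose eqType
   instances agree only up to conversion. *)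
Ltac ring_indicators :=
  repeat match goal with
    |- context [nat_of_bool ?b] => let n := fresh "n" in set n := nat_of_bool b; clearbody n
  end; ring.

Section OrientationLoss.
Variables (R : realFieldType) (NB NQ NU NK : nat) (S : system R NB NQ NU NK).
Notation etaT := (Defs.eta NB NQ NU NK).
Notation kap2T := (kap2 NB NQ NU NK).

Lemma eqTbuE b u k b' u' k' :
  (Tbu b u k == Tbu b' u' k' :> etaT) = ((b, u, k) == (b', u', k')).
Proof. by apply/eqP/eqP => [[-> -> ->]|[-> -> ->]]. Qed.

Lemma eqTquE q u k q' u' k' :
  (Tqu q u k == Tqu q' u' k' :> etaT) = ((q, u, k) == (q', u', k')).
Proof. by apply/eqP/eqP => [[-> -> ->]|[-> -> ->]]. Qed.

Lemma eqNuisE x y : (Nuis x == Nuis y :> etaT) = (x == y).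
Proof. by apply/eqP/eqP => [[]|->]. Qed.

Lemma eqDbUE b b' : (DbU b == DbU b' :> kap2T) = (b == b').
Proof. by apply/eqP/eqP => [[]|->]. Qed.

Lemma EindE (p q m n : etaT) : Eind R p q m n = (m == p)%:R * (n == q)%:R.
Proof. by rewrite /Eind -natrM mulnb. Qed.

Lemma Eind_nuis (x y i j : kap2T) :
  Eind R (Nuis x) (Nuis y) (Nuis i) (Nuis j) = ((i == x) && (j == y))%:R.
Proof. by rewrite /Eind !eqNuisE. Qed.

Lemma Jeta_nuis_offdiag i j : i != j -> Jeta S (Nuis i) (Nuis j) = 0.
Proof.
move=> ij; have diag0 x : (i == x) && (j == x) = false.
  by apply/andP => -[/eqP ix /eqP jx]; move: ij; rewrite ix jx eqxx.
rewrite /Jeta !sum3_eq0 ?addr0 // => *; rewrite !Eind_nuis !diag0 !EindE /=; ring_indicators.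
Qed.

Lemma Jeta_DbU b : Jeta S (Nuis (DbU b)) (Nuis (DbU b)) = den_b S b.
Proof.
rewrite /Jeta -[den_b S b]addr0 -[den_b S b]addr0; congr (_ + _ + _); last first.
- by apply: sum3_eq0 => *; rewrite !EindE /=; ring_indicators.
- by apply: sum3_eq0 => *; rewrite !EindE /=; ring_indicators.
rewrite /den_b -(sumr_delta b (fun b0 => \sum_u \sum_k SNRbu S b0 u k * omega_bU S b0 k)).
apply: eq_bigr => b0 _; rewrite mulr_sumr; apply: eq_bigr => u _; rewrite mulr_sumr.
apply: eq_bigr => k _.
by rewrite !EindE !eqNuisE eqDbUE /=; case: eqP => _ /=; ring.
Qed.

Lemma Jeta_DQU : Jeta S (Nuis DQU) (Nuis DQU) = den_Q S.
Proof.
rewrite /Jeta -[RHS]add0r -[RHS]addr0; congr (_ + _ + _).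
- by apply: sum3_eq0 => *; rewrite !EindE /=; ring_indicators.
- by apply: eq_sum3 => *; rewrite !EindE !eqNuisE eqxx /=; ring_indicators.
- by apply: sum3_eq0 => *; rewrite !EindE /=; ring_indicators.
Qed.

Lemma Jeta_Tbu_nuis b u k j :
  Jeta S (Tbu b u k) (Nuis j) = - ((j == DbU b)%:R * (SNRbu S b u k * omega_bU S b k)).
Proof.
rewrite /Jeta -[RHS]addr0 -[RHS]addr0; congr (_ + _ + _); last first.
- by apply: sum3_eq0 => *; rewrite !EindE /=; ring_indicators.
- by apply: sum3_eq0 => *; rewrite !EindE /=; ring_indicators.
rewrite -(sum3_delta b u k (fun b0 u0 k0 =>
  - ((j == DbU b0)%:R * (SNRbu S b0 u0 k0 * omega_bU S b0 k0)))).
by apply: eq_sum3 => *; rewrite !EindE eqTbuE !eqNuisE /=; ring_indicators.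
Qed.

Lemma Jeta_Tqu_nuis q u k j :
  Jeta S (Tqu q u k) (Nuis j) = - ((j == DQU)%:R * (SNRqu S q u k * omega_qU S q k)).
Proof.
rewrite /Jeta -[RHS]add0r -[RHS]addr0; congr (_ + _ + _).
- by apply: sum3_eq0 => *; rewrite !EindE /=; ring_indicators.
- rewrite -(sum3_delta q u k (fun q0 u0 k0 =>
    - ((j == DQU)%:R * (SNRqu S q0 u0 k0 * omega_qU S q0 k0)))).
  by apply: eq_sum3 => *; rewrite !EindE eqTquE !eqNuisE /=; ring_indicators.
- by apply: sum3_eq0 => *; rewrite !EindE /=; ring_indicators.
Qed.

Lemma Ups1_KPhi a m :
  Ups1 S (KPhi a) m =
    \sum_b \sum_u \sum_k (m == Tbu b u k)%:R * gradPhi_tau S (Delta_bu S b u k) u a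
  + \sum_q \sum_u \sum_k (m == Tqu q u k)%:R * gradPhi_tau S (Delta_qu S q u k) u a.
Proof.
case: m => [x|b u k|b k|q u k|q k|b q k|b q k] /=;
  try by rewrite !sum3_eq0 ?addr0 // => *; rewrite mul0r.
- rewrite [X in _ + X]sum3_eq0 ?addr0 => [|*]; last exact: mul0r.
  rewrite -[LHS](sum3_delta b u k (fun b0 u0 k0 => gradPhi_tau S (Delta_bu S b0 u0 k0) u0 a)).
  by apply: eq_sum3 => *; rewrite eqTbuE.
- rewrite [X in X + _]sum3_eq0 ?add0r => [|*]; last exact: mul0r.
  rewrite -[LHS](sum3_delta q u k (fun q0 u0 k0 => gradPhi_tau S (Delta_qu S q0 u0 k0) u0 a)).
  by apply: eq_sum3 => *; rewrite eqTquE.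
Qed.

Lemma J12_KPhi_sum a j :
  J12 S (KPhi a) j =
    \sum_b \sum_u \sum_k gradPhi_tau S (Delta_bu S b u k) u a * Jeta S (Tbu b u k) (Nuis j)
  + \sum_q \sum_u \sum_k gradPhi_tau S (Delta_qu S q u k) u a * Jeta S (Tqu q u k) (Nuis j).
Proof.
rewrite /J12 /Jkappa.
under eq_bigr => m _ do rewrite sumr_delta_r -[Ups S _ m]/(Ups1 S (KPhi a) m) Ups1_KPhi mulrDl.
by rewrite big_split /= !sum3_delta_image.
Qed.

Definition orient_load (j : kap2T) : 'I_3 -> R :=
  match j with DbU b => a_b S b | DQU => a_Q S | _ => fun=> 0 end.

Lemma J12_KPhi a j : J12 S (KPhi a) j = - orient_load j a.
Proof.
rewrite J12_KPhi_sum.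
under eq_sum3 => b u k do rewrite Jeta_Tbu_nuis.
under [X in _ + X]eq_sum3 => q u k do rewrite Jeta_Tqu_nuis.
case: j => [b u k|q u k|b q k|b|b|||b|b] /=;
  try by rewrite !sum3_eq0 ?addr0 ?oppr0 // => *; rewrite mul0r oppr0 mulr0.
- rewrite [X in _ + X]sum3_eq0 ?addr0 => [|*]; last by rewrite mul0r oppr0 mulr0.
  rewrite /a_b [in RHS]exchange_big -(sumr_delta b (fun b0 => - \sum_u \sum_k
    SNRbu S b0 u k * omega_bU S b0 k * gradPhi_tau S (Delta_bu S b0 u k) u a)).
  apply: eq_bigr => b0 _; rewrite mulrN mulr_sumr -sumrN; apply: eq_bigr => u _.
  rewrite mulr_sumr -sumrN; apply: eq_bigr => k _.
  by rewrite eqDbUE; ring_indicators.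
- rewrite [X in X + _]sum3_eq0 ?add0r => [|*]; last by rewrite mul0r oppr0 mulr0.
  rewrite /a_Q -sumrN; apply: eq_bigr => q _.
  rewrite [in RHS]exchange_big -sumrN; apply: eq_bigr => u _.
  by rewrite -sumrN; apply: eq_bigr => k _; ring_indicators.
Qed.

Lemma J22_nuis i j : J22 S i j = Jeta S (Nuis i) (Nuis j).
Proof.
rewrite /J22 /Jkappa -(sumr_delta (Nuis i) (fun m => Jeta S m (Nuis j))).
by apply: eq_bigr => m _; rewrite sumr_delta_r /= eq_sym.
Qed.

Lemma J22mx_is_diag : is_diag_mx (J22mx S).
Proof.
apply/is_diag_mxP => i j ij; rewrite mxE J22_nuis Jeta_nuis_offdiag //.
by apply: contraNneq ij => /enum_val_inj ->.
Qed.

Lemma J22inv_diag m n : J22mx S \in unitmx ->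
  J22inv S m n = (m == n)%:R * (J22 S m m)^-1.
Proof.
move=> J22unit; rewrite /J22inv invmx_diag ?J22mx_is_diag // !mxE enum_rankK.
by rewrite (inj_eq enum_rank_inj) mulr_natl.
Qed.

Lemma Gloss_KPhi a c : J22mx S \in unitmx ->
  Gloss S (KPhi a) (KPhi c) = \sum_m (J22 S m m)^-1 * (orient_load m a * orient_load m c).
Proof.
move=> J22unit; apply: eq_bigr => m _.
rewrite -(sumr_delta m (fun n => (J22 S m m)^-1 * (orient_load m a * orient_load n c))).
by apply: eq_bigr => n _; rewrite J22inv_diag // !J12_KPhi; ring_indicators.
Qed.

Lemma sum_orient_load (f : kap2T -> R) a c :
  \sum_m f m * (orient_load m a * orient_load m c)
  = \sum_b f (DbU b) * (a_b S b a * a_b S b c) + f DQU * (a_Q S a * a_Q S c).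
Proof.
have split_load m : f m * (orient_load m a * orient_load m c)
    = \sum_b f (DbU b) * (a_b S b a * a_b S b c) * (m == DbU b)%:R
    + f DQU * (a_Q S a * a_Q S c) * (m == DQU)%:R.
  case: m => [b u k|q u k|b q k|b|b|||b|b] /=;
    try by rewrite big1 ?mulr0 ?addr0 // => *; rewrite mulr0.
  - under eq_bigr do rewrite eqDbUE mulrC.
    by rewrite sumr_delta mulr0 addr0.
  - by rewrite big1 ?mulr1 ?add0r // => *; rewrite mulr0.
under eq_bigr do rewrite split_load.
by rewrite big_split /= exchange_big sumr_delta_r; under eq_bigr do rewrite sumr_delta_r.
Qed.

End OrientationLoss.

Theorem lemma25 (R : realFieldType) (NB NQ NU NK : nat)
  (S : system R NB NQ NU NK)
  (HJ2 : J22mx S \in unitmx) :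
  G_PhiPhi S =
    \sum_(b < NB) (den_b S b)^-1 *: outer3 (a_b S b)
    + (den_Q S)^-1 *: outer3 (a_Q S).
Proof.
apply/matrixP => i j; rewrite !mxE summxE Gloss_KPhi // sum_orient_load /=.
rewrite J22_nuis Jeta_DQU; congr (_ + _); apply: eq_bigr => b _.
by rewrite J22_nuis Jeta_DbU !mxE.
Qed.
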